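(* Let $q$ be a power of $2$ and $k\ge1$ an integer. Let $L\in\mathbb{F}_{q^{3k}}[x]$ be a $2$-linearized polynomial (i.e. $L=\sum_i c_i x^{2^i}$ with $c_i\in\mathbb{F}_{q^{3k}}$) such that (i) $L$ permutes $\mathbb{F}_{q^k}$ (in particular maps $\mathbb{F}_{q^k}$ bijectively onto itself), and (ii) $L+L^{q^{2k}}\equiv S_{2k}^2+S_{2k}^{2q^{k+1}}\pmod{x^{q^{3k}}-x}$. Then $L+S_{2k}^{q^k+1}$ is a permutation polynomial of $\mathbb{F}_{q^{3k}}$.
   Context: $\mathbb{F}_Q$ is the finite field with $Q$ elements. For a power $q$ of $2$ and positive integer $m$, $S_m=x+x^q+\cdots+x^{q^{m-1}}\in\mathbb{F}_2[x]$; exponents on $S_m$ and $L$ denote powers of polynomials (so $L^{q^{2k}}$ is the $q^{2k}$-th power of $L$). A polynomial $f$ is a permutation polynomial of $\mathbb{F}_Q$ if $c\mapsto f(c)$ is a bijection of $\mathbb{F}_Q$. *)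

From HB Require Import structures.
From mathcomp Require Import all_boot all_order all_algebra all_field.
Set Implicit Arguments. Unset Strict Implicit. Unset Printing Implicit Defensive.
Import GRing.Theory.
Local Open Scope ring_scope.

Definition S_poly (F : fieldType) (q m : nat) : {poly F} :=
  \sum_(i < m) 'X^(q ^ i).

Definition two_linearized (F : fieldType) (L : {poly F}) : Prop :=
  exists (n : nat) (c : nat -> F), L = \sum_(i < n) c i *: 'X^(2 ^ i).

(* the subfield F_{q^k} of F: elements fixed by x |-> x^{q^k} *)
Definition in_subfield (F : fieldType) (Qk : nat) (a : F) : bool :=
  a ^+ Qk == a.

(* L permutes the subfield {a | a^Qk = a}: maps it into itself, injectively
   (hence bijectively, the subfield being finite) *)
Definition permutes_subfield (F : fieldType) (Qk : nat) (L : {poly F}) : Prop :=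
  (forall a, in_subfield Qk a -> in_subfield Qk L.[a]) /\
  (forall a b, in_subfield Qk a -> in_subfield Qk b -> L.[a] = L.[b] -> a = b).

Definition is_perm_poly (F : finFieldType) (p : {poly F}) : Prop :=
  bijective (fun c : F => p.[c]).

From HB Require Import structures.
From mathcomp Require Import all_boot all_order all_algebra all_field.
From mathcomp Require Import zify ring.
Set Implicit Arguments. Unset Strict Implicit. Unset Printing Implicit Defensive.
Import GRing.Theory.
Local Open Scope ring_scope.

(* Put m := q^k and s := S_{2k}.  Since x^(m^3) = x on F and S_{2k} = S_k + S_k^m,
   s + s^m + s^(m^2) = 0; with (ii) this gives f + f^(m^2) = s^(2qm) for
   f := L + s^(m+1).  So f(x) = f(y) forces s(x + y) = 0, hence, as
   S_n^q + S_n = x^(q^n) + x, the difference d = x + y satisfies d^(m^2) = d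
   and lies in F_{q^k}; there L(d) = f(x) + f(y) = 0, so d = 0 by (i). *)

Section FrobeniusPowers.
Variable F : fieldType.

Lemma expr_sum_pchar (I : Type) (r : seq I) (P : pred I) (G : I -> F) N :
  [pchar F].-nat N ->
  (\sum_(i <- r | P i) G i) ^+ N = \sum_(i <- r | P i) G i ^+ N.
Proof.
move=> pN; apply: (big_morph (fun y => y ^+ N)) => [a b|].
  exact: exprDn_pchar.
by rewrite expr0n; case: N pN.
Qed.

Lemma expr_pchar_inj N : [pchar F].-nat N -> injective (fun x : F => x ^+ N).
Proof.
move=> pN x y /= eq_xyN; apply/eqP; rewrite -subr_eq0.
have : (x - y) ^+ N + y ^+ N = x ^+ N by rewrite -exprDn_pchar // subrK.
by rewrite eq_xyN -{2}[y ^+ N]add0r => /addIr /eqP; rewrite expf_eq0 => /andP[].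
Qed.

Hypothesis pchar2 : 2 \in [pchar F].

Lemma pchar2_nat_exp2 j : [pchar F].-nat (2 ^ j)%N.
Proof. by rewrite pnatX (eq_pnat _ (pcharf_eq pchar2)) pnat_id. Qed.

Lemma pchar2_addr_eq0 (a b : F) : (a + b == 0) = (a == b).
Proof. by rewrite addr_eq0 oppr_pchar2. Qed.

Lemma two_linearized_hornerD (L : {poly F}) a b :
  two_linearized L -> L.[a + b] = L.[a] + L.[b].
Proof.
move=> [n [c ->]]; rewrite !horner_sum -big_split; apply: eq_bigr => i _ /=.
by rewrite !hornerZ !hornerXn exprDn_pchar ?pchar2_nat_exp2 // mulrDr.
Qed.

End FrobeniusPowers.

Lemma dvdp_XcardX_horner (F : finFieldType) (p : {poly F}) x :
  ('X^#|F| - 'X) %| p -> p.[x] = 0.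
Proof.
by case/dvdpP=> r ->; rewrite hornerM !hornerE expf_card subrr mulr0.
Qed.

Section TracePolynomial.
Variables (F : fieldType) (q : nat).
Hypothesis pcharq : [pchar F].-nat q.

Lemma horner_S_poly n x : (S_poly F q n).[x] = \sum_(i < n) x ^+ (q ^ i)%N.
Proof. by rewrite horner_sum; apply: eq_bigr => i _; rewrite hornerXn. Qed.

Lemma horner_S_poly1 x : (S_poly F q 1).[x] = x.
Proof. by rewrite horner_S_poly big_ord1 expn0 expr1. Qed.

Lemma horner_S_polyD n x y :
  (S_poly F q n).[x + y] = (S_poly F q n).[x] + (S_poly F q n).[y].
Proof.
rewrite !horner_S_poly -big_split; apply: eq_bigr => i _.
by rewrite exprDn_pchar // pnatX pcharq.
Qed.

Lemma horner_S_poly_cat a b x :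
  (S_poly F q (a + b)).[x] = (S_poly F q a).[x] + (S_poly F q b).[x] ^+ (q ^ a)%N.
Proof.
rewrite !horner_S_poly big_split_ord expr_sum_pchar ?pnatX ?pcharq //=.
by congr (_ + _); apply: eq_bigr => i _; rewrite -exprM -expnD addnC.
Qed.

Hypothesis pchar2 : 2 \in [pchar F].

Lemma horner_S_poly_frob n x :
  (S_poly F q n).[x] ^+ q + (S_poly F q n).[x] = x ^+ (q ^ n)%N + x.
Proof.
have := horner_S_poly_cat 1 n x; rewrite addnC horner_S_poly_cat.
rewrite !horner_S_poly1 expn1; set t := _.[x] => eq_cat.
apply/eqP; rewrite -pchar2_addr_eq0 //.
have -> : t ^+ q + t + (x ^+ (q ^ n) + x) = t + x ^+ (q ^ n) + (x + t ^+ q).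
  by ring.
by rewrite eq_cat addrr_pchar2.
Qed.

End TracePolynomial.

Section FiniteField.
Variables (F : finFieldType) (q k : nat).
Hypotheses (pchar2 : 2 \in [pchar F]) (pcharq : [pchar F].-nat q).
Hypothesis cardF : #|F| = (q ^ (3 * k))%N.

Local Notation m := (q ^ k)%N.
Local Notation s x := (S_poly F q (2 * k)).[x].

Lemma expn_subfield_gt0 : (0 < m)%N.
Proof. by rewrite expn_gt0; case/andP: pcharq => ->. Qed.

Lemma expr_card_cube (x : F) : x ^+ (m * m * m) = x.
Proof.
have -> : (m * m * m = #|F|)%N by rewrite cardF -!expnD; congr expn; lia.
exact: expf_card.
Qed.

Lemma S_poly_trace x : s x + s x ^+ m + s x ^+ (m * m) = 0.
Proof.
have pcharm : [pchar F].-nat m by rewrite pnatX pcharq.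
rewrite mul2n -addnn horner_S_poly_cat //; set t := _.[x].
rewrite !exprDn_pchar ?pnatM ?pcharm // -!exprM mulnA expr_card_cube.
have -> : t + t ^+ m + (t ^+ m + t ^+ (m * m)) + (t ^+ (m * m) + t) =
          (t + t) + (t ^+ m + t ^+ m) + (t ^+ (m * m) + t ^+ (m * m)) by ring.
by rewrite !addrr_pchar2 // !addr0.
Qed.

Lemma S_poly_root_in_subfield d : s d = 0 -> in_subfield m d.
Proof.
move=> sd0; have := horner_S_poly_frob pcharq pchar2 (2 * k) d.
have q_gt0 : (0 < q)%N by case/andP: pcharq.
rewrite sd0 expr0n eqn0Ngt q_gt0 add0r mulnC expnM expnS expn1 => /eqP.
rewrite eq_sym pchar2_addr_eq0 // => /eqP dmm.
by rewrite /in_subfield -{1}dmm -exprM expr_card_cube.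
Qed.

Lemma S_poly_twist_frob (L : {poly F}) x :
  (L.[x] + s x ^+ (m + 1)) + (L.[x] + s x ^+ (m + 1)) ^+ (m * m) =
  L.[x] + L.[x] ^+ (m * m) + s x ^+ 2.
Proof.
have s_mm : s x ^+ (m * m) = s x + s x ^+ m.
  by apply/eqP; rewrite -pchar2_addr_eq0 // addrC S_poly_trace.
rewrite exprDn_pchar ?pnatM ?pnatX ?pcharq // -exprM mulnDl mul1n !exprD mulnA.
rewrite expr_card_cube s_mm expr1.
transitivity (L.[x] + L.[x] ^+ (m * m) + s x ^+ 2 +
              (s x ^+ m * s x + s x ^+ m * s x)); first by ring.
by rewrite addrr_pchar2 // addr0.
Qed.

Variable L : {poly F}.
Hypothesis L_additive : forall a b, L.[a + b] = L.[a] + L.[b].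
Hypothesis L_inj_subfield : forall a b,
  in_subfield m a -> in_subfield m b -> L.[a] = L.[b] -> a = b.
Hypothesis L_frob : forall x,
  L.[x] + L.[x] ^+ (q ^ (2 * k)) = s x ^+ 2 + s x ^+ (2 * q ^ k.+1).

Let f x := L.[x] + s x ^+ (m + 1).

Lemma twist_frob x : f x + f x ^+ (m * m) = s x ^+ (2 * q ^ k.+1).
Proof.
rewrite S_poly_twist_frob -{1}[(m * m)%N]expnD addnn -mul2n L_frob.
by rewrite addrAC addrr_pchar2 // add0r.
Qed.

Lemma twist_injective :
  injective (fun x => (L + S_poly F q (2 * k) ^+ (m + 1)).[x]).
Proof.
move=> x y; rewrite /= !hornerD !horner_exp -/(f x) -/(f y) => eq_f.
have eq_s : s x = s y.
  apply: (@expr_pchar_inj _ (2 * q ^ k.+1)).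
    by rewrite pnatM pnatX pcharq -[2%N]expn1 pchar2_nat_exp2.
  by rewrite /= -!twist_frob eq_f.
have L0 : L.[0] = 0 by have := L_additive 0 0; rewrite addr0 addrr_pchar2.
have Lxy : L.[x + y] = L.[0].
  rewrite L_additive L0; move: eq_f; rewrite /f eq_s => /addIr ->.
  by rewrite addrr_pchar2.
have sxy : s (x + y) = 0 by rewrite horner_S_polyD // eq_s addrr_pchar2.
apply/eqP; rewrite -pchar2_addr_eq0 //; apply/eqP.
apply: L_inj_subfield Lxy; first exact: S_poly_root_in_subfield.
by rewrite /in_subfield expr0n eqn0Ngt expn_subfield_gt0.
Qed.

End FiniteField.

Theorem theorem4p1 (F : finFieldType) (e k : nat) (L : {poly F}) :
  (0 < e)%N -> (0 < k)%N ->
  #|F| = ((2 ^ e) ^ (3 * k))%N ->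
  two_linearized L ->
  permutes_subfield ((2 ^ e) ^ k)%N L ->
  ('X^#|F| - 'X) %| ((L + L ^+ ((2 ^ e) ^ (2 * k))) -
     (S_poly F (2 ^ e) (2 * k) ^+ 2
      + S_poly F (2 ^ e) (2 * k) ^+ (2 * (2 ^ e) ^ k.+1))) ->
  is_perm_poly (L + S_poly F (2 ^ e) (2 * k) ^+ ((2 ^ e) ^ k + 1)).
Proof.
move=> _ _ cardF linL [_ L_inj] dvdL.
have pchar2 : 2 \in [pchar F].
  by apply: (card_finPcharP (n := (e * (3 * k))%N)); rewrite ?cardF ?expnM.
have L_frob x := dvdp_XcardX_horner x dvdL.
apply: injF_bij; apply: (twist_injective pchar2 (pchar2_nat_exp2 pchar2 e) cardF
  (fun a b => two_linearized_hornerD pchar2 a b linL) L_inj) => x.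
by apply/eqP; rewrite -subr_eq0; have := L_frob x; rewrite !hornerE => ->.
Qed.
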